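(* If $(a,b)\in R_1\cup R_2$, then $J(a,b)\ge 3/17$.
   Context: For $(a,b)\in\mathbb R^2$ define $f_{a,b}(x_1,x_2)=[b+a(x_1+x_2)+x_1x_2](2-x_1-x_2)$. Let $X_1=\{(x_1,x_2):-1\le x_1\le 0,\ -x_1\le x_2\le 1\}$ and $X_2=\{(x_1,x_2):-1\le x_1\le0,\ x_1\le x_2\le -x_1\}$. Let $\chi_{a,b}=\max_{X_1\cup X_2}f_{a,b}$, $m_{a,b}=\min_{X_1\cup X_2}f_{a,b}$, $R=\{(a,b)\in\mathbb R^2: m_{a,b}>0\}$, and for $(a,b)\in R$ let $J(a,b)=\frac{\chi_{a,b}-m_{a,b}}{\chi_{a,b}+m_{a,b}}$. Whenever $(1-2a)^2\ge3(b-2a)$ let $t_-=\frac{2a-1-\sqrt{(1-2a)^2-3(b-2a)}}{3/2}$. Define $R_1=\{(a,b)\in R:(1-2a)^2<3(b-2a)\}$ and $R_2=\{(a,b)\in R:(1-2a)^2\ge3(b-2a)>0,\ t_-\notin[0,2]\}$. *)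

From Stdlib Require Import Reals Lra.
Open Scope R_scope.

Definition f (a b x1 x2 : R) : R :=
  (b + a * (x1 + x2) + x1 * x2) * (2 - x1 - x2).

Definition X1 (x1 x2 : R) : Prop := -1 <= x1 <= 0 /\ - x1 <= x2 <= 1.
Definition X2 (x1 x2 : R) : Prop := -1 <= x1 <= 0 /\ x1 <= x2 <= - x1.
Definition X (x1 x2 : R) : Prop := X1 x1 x2 \/ X2 x1 x2.

Definition is_max_f (a b M : R) : Prop :=
  (exists x1 x2, X x1 x2 /\ f a b x1 x2 = M) /\
  (forall x1 x2, X x1 x2 -> f a b x1 x2 <= M).

Definition is_min_f (a b m : R) : Prop :=
  (exists x1 x2, X x1 x2 /\ f a b x1 x2 = m) /\
  (forall x1 x2, X x1 x2 -> m <= f a b x1 x2).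

Definition tminus (a b : R) : R :=
  (2 * a - 1 - sqrt ((1 - 2 * a) ^ 2 - 3 * (b - 2 * a))) / (3 / 2).

(* membership conditions of R1 and R2, beyond (a,b) ∈ R *)
Definition R1_cond (a b : R) : Prop := (1 - 2 * a) ^ 2 < 3 * (b - 2 * a).
Definition R2_cond (a b : R) : Prop :=
  (1 - 2 * a) ^ 2 >= 3 * (b - 2 * a) /\ 3 * (b - 2 * a) > 0 /\
  ~ (0 <= tminus a b <= 2).

(** Evaluating [f a b] at the corners (0,0), (-1,1), (0,1), (-1,0) of the domain gives
    [2 b <= chi] and [m <= min (2 b - 2, a + b, 3 (b - a))], hence [10 m <= 7 chi],
    which is [J a b >= 3/17], except in the wedge [b > 10/3], [2b/5 < a < 8b/15].
    In that wedge [(1 - 2a)^2 >= 3 (b - 2a)] and [t_- ∈ [0,2]], so [(a,b)] lies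
    neither in [R1] nor in [R2]. *)

From Pilot Require Import Defs.
From Stdlib Require Import Reals Lra Psatz.
Open Scope R_scope.

Lemma ratio_ge_of_le (c chi m : R) :
  0 < chi + m -> (1 + c) * m <= (1 - c) * chi -> c <= (chi - m) / (chi + m).
Proof.
  intros Hpos Hle.
  apply Rmult_le_reg_r with (chi + m); [exact Hpos |].
  unfold Rdiv; rewrite Rmult_assoc, Rinv_l by lra; lra.
Qed.

Lemma X_00 : X 0 0.   Proof. right; unfold X2; lra. Qed.
Lemma X_m11 : X (-1) 1. Proof. left; unfold X1; lra. Qed.
Lemma X_01 : X 0 1.   Proof. left; unfold X1; lra. Qed.
Lemma X_m10 : X (-1) 0. Proof. right; unfold X2; lra. Qed.

Lemma min_le_max (a b chi m : R) : is_max_f a b chi -> is_min_f a b m -> m <= chi.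
Proof.
  intros [_ Hmax] [[x1 [x2 [Hx <-]]] _].
  exact (Hmax x1 x2 Hx).
Qed.

Lemma max_ge_corner (a b chi : R) : is_max_f a b chi -> 2 * b <= chi.
Proof.
  intros [_ Hmax].
  generalize (Hmax _ _ X_00); unfold Defs.f; lra.
Qed.

Lemma min_le_corners (a b m : R) :
  is_min_f a b m -> m <= 2 * b - 2 /\ m <= a + b /\ m <= 3 * (b - a).
Proof.
  intros [_ Hmin].
  generalize (Hmin _ _ X_m11) (Hmin _ _ X_01) (Hmin _ _ X_m10); unfold Defs.f.
  lra.
Qed.

Lemma ten_min_le_seven_max (a b chi m : R) :
  2 * b <= chi -> m <= 2 * b - 2 -> m <= a + b -> m <= 3 * (b - a) ->
  b <= 10 / 3 \/ a <= 2 / 5 * b \/ 8 / 15 * b <= a ->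
  10 * m <= 7 * chi.
Proof. lra. Qed.

Lemma tminus_nonneg (a b : R) : 1 / 2 <= a -> 0 <= b - 2 * a -> 0 <= tminus a b.
Proof.
  intros Ha Hb; unfold tminus.
  assert (Hsqrt : sqrt ((1 - 2 * a) ^ 2 - 3 * (b - 2 * a)) <= 2 * a - 1).
  { rewrite <- (sqrt_pow2 (2 * a - 1)) by lra.
    apply sqrt_le_1_alt; nra. }
  lra.
Qed.

(* With [D := (1 - 2a)^2 - 3 (b - 2a)], [t_- <= 2] means [2a - 4 <= sqrt D],
   and [D - (2a - 4)^2 = 3 (6a - 5 - b)]. *)
Lemma tminus_le_two (a b : R) :
  a <= 2 \/ b + 5 <= 6 * a -> tminus a b <= 2.
Proof.
  intros Hab; unfold tminus.
  assert (Hsqrt : 2 * a - 4 <= sqrt ((1 - 2 * a) ^ 2 - 3 * (b - 2 * a))).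
  { destruct (Rle_dec (2 * a - 4) 0) as [Hneg | Hpos].
    - pose proof (sqrt_pos ((1 - 2 * a) ^ 2 - 3 * (b - 2 * a))); lra.
    - rewrite <- (sqrt_pow2 (2 * a - 4)) by lra.
      apply sqrt_le_1_alt; destruct Hab; nra. }
  lra.
Qed.

Lemma not_R1_cond_wedge (a b : R) : 10 / 3 < b -> 2 / 5 * b < a -> ~ R1_cond a b.
Proof. unfold R1_cond; intros Hb Ha H; nra. Qed.

Lemma not_R2_cond_wedge (a b : R) :
  10 / 3 < b -> 2 / 5 * b < a < 8 / 15 * b -> ~ R2_cond a b.
Proof.
  intros Hb Ha [_ [Hpos Ht]]; apply Ht; split.
  - apply tminus_nonneg; lra.
  - apply tminus_le_two.
    destruct (Rle_dec a 2); [left | right]; lra.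
Qed.

Lemma R1_R2_outside_wedge (a b : R) :
  R1_cond a b \/ R2_cond a b -> b <= 10 / 3 \/ a <= 2 / 5 * b \/ 8 / 15 * b <= a.
Proof.
  intros HR.
  destruct (Rle_dec b (10 / 3)); [now left |].
  destruct (Rle_dec a (2 / 5 * b)); [now right; left |].
  destruct (Rle_dec (8 / 15 * b) a); [now right; right |].
  exfalso; destruct HR as [H1 | H2].
  - apply (not_R1_cond_wedge a b); [lra | lra | exact H1].
  - apply (not_R2_cond_wedge a b); [lra | lra | exact H2].
Qed.

Theorem propositionA3 (a b chi m : R) :
  is_max_f a b chi -> is_min_f a b m ->
  m > 0 ->
  (R1_cond a b \/ R2_cond a b) ->
  (chi - m) / (chi + m) >= 3 / 17.
Proof.
  intros Hmax Hmin Hm HR.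
  pose proof (min_le_max a b chi m Hmax Hmin) as Hmchi.
  pose proof (max_ge_corner a b chi Hmax) as Hchi.
  destruct (min_le_corners a b m Hmin) as [Hm1 [Hm2 Hm3]].
  pose proof (ten_min_le_seven_max a b chi m Hchi Hm1 Hm2 Hm3
                (R1_R2_outside_wedge a b HR)) as Hkey.
  apply Rle_ge, ratio_ge_of_le; lra.
Qed.
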